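(* For an integer $R\ge 2$ and $n\ge1$, let $\ket{\psi_R^n}=c\sum_{k=0}^{R-1}R_y\!\big(\tfrac{2\pi k}{R}\big)^{\otimes n}\ket{0}^{\otimes n}$, where $c>0$ is the normalization constant (defined whenever the sum is nonzero, which holds for all sufficiently large $n$). Then $\lim_{n\to\infty}\mathcal{C}(\ket{\psi_R^n})=\frac{R-1}{R}$, and there exists $n_0$ such that $\mathrm{rk}(\ket{\psi_R^n})=R$ for all $n\ge n_0$.
   Context: $R_y(\theta)=\exp(-i\theta\sigma_y/2)$ is the single-qubit rotation with $R_y(\theta)\ket{0}=\cos(\theta/2)\ket{0}+\sin(\theta/2)\ket{1}$. The CP rank $\mathrm{rk}(\ket{\psi})$ is the minimal $r$ with $\ket{\psi}=\sum_{i=1}^r c_i\bigotimes_{j=1}^n\ket{\phi_i^{(j)}}$. The concentratable entanglement is $\mathcal{C}(\ket{\psi})=1-\frac{1}{2^{n}}\sum_{\alpha\subseteq [n]}\mathrm{Tr}[\rho_\alpha^2]$, with $\rho_\alpha$ the reduced state on $\alpha$ and $\mathrm{Tr}[\rho_\emptyset^2]=1$. *)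

From HB Require Import structures.
From mathcomp Require Import all_boot all_order all_algebra.
From mathcomp Require Import complex.
From mathcomp Require Import all_classical all_reals all_analysis.
Set Implicit Arguments. Unset Strict Implicit. Unset Printing Implicit Defensive.
Import Order.TTheory GRing.Theory Num.Theory.
Local Open Scope ring_scope.
Local Open Scope complex_scope.

Section QuantumDefs.
Variable R : realType.
Local Notation C := (R[i]).

(* computational basis of n qubits: bit strings x : 'I_n -> bool *)
Definition config (n : nat) := {ffun 'I_n -> bool}.

Definition state (n : nat) := config n -> C.

(* single-qubit ket and operators, indexed by bool (false = |0>, true = |1>) *)
Definition ket0 : bool -> C := fun b => if b then 0 else 1.

(* R_y(theta) = exp(-i theta sigma_y / 2) = [[cos, -sin],[sin, cos]](theta/2);
   entry (b, b') = <b| R_y(theta) |b'> *)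
Definition Ry (theta : R) : bool -> bool -> C := fun b b' =>
  match b, b' with
  | false, false => (cos (theta / 2))%:C
  | false, true  => (- sin (theta / 2))%:C
  | true,  false => (sin (theta / 2))%:C
  | true,  true  => (cos (theta / 2))%:C
  end.

Definition apply1 (U : bool -> bool -> C) (v : bool -> C) : bool -> C :=
  fun b => \sum_(b' : bool) U b b' * v b'.

Definition tens (n : nat) (phi : 'I_n -> bool -> C) : state n :=
  fun x => \prod_(j < n) phi j (x j).

(* U^{(x) n} |0>^{(x) n} = (U|0>)^{(x) n} *)
Definition tens_pow_ket0 (n : nat) (U : bool -> bool -> C) : state n :=
  tens (fun _ : 'I_n => apply1 U ket0).

Definition sqnorm (n : nat) (psi : state n) : R :=
  \sum_(x : config n) complex.Re (psi x * (psi x)^*).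

Definition normalize (n : nat) (psi : state n) : state n :=
  fun x => ((Num.sqrt (sqnorm psi))^-1)%:C * psi x.

Definition mix (n : nat) (alpha : {set 'I_n}) (x y : config n) : config n :=
  [ffun j => if j \in alpha then x j else y j].

(* reduced density matrix rho_alpha of |psi><psi|, with rows/columns indexed by
   assignments on alpha (a, b only matter on alpha) *)
Definition rho (n : nat) (psi : state n) (alpha : {set 'I_n}) (a b : config n) : C :=
  \sum_(c : config n | [forall j in alpha, c j == false])
     psi (mix alpha a c) * (psi (mix alpha b c))^*.

(* Tr[rho_alpha^2]: sum over the assignments on alpha (represented by
   bit strings vanishing outside alpha) *)
Definition purity (n : nat) (psi : state n) (alpha : {set 'I_n}) : C :=
  \sum_(a : config n | [forall j in ~: alpha, a j == false])
    \sum_(b : config n | [forall j in ~: alpha, b j == false])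
      rho psi alpha a b * rho psi alpha b a.

Definition conc_ent (n : nat) (psi : state n) : C :=
  1 - (2 ^+ n)^-1 * \sum_(alpha : {set 'I_n}) purity psi alpha.

Definition has_cp_decomp (n : nat) (psi : state n) (r : nat) : Prop :=
  exists (c : 'I_r -> C) (phi : 'I_r -> 'I_n -> bool -> C),
    forall x : config n, psi x = \sum_(i < r) c i * tens (phi i) x.

Definition cp_rank_eq (n : nat) (psi : state n) (r : nat) : Prop :=
  has_cp_decomp psi r /\ forall r', has_cp_decomp psi r' -> (r <= r')%N.

Definition psiR_un (Rn n : nat) : state n :=
  fun x => \sum_(k < Rn) @tens_pow_ket0 n (Ry (2 * pi * k%:R / Rn%:R)) x.

Definition psiR (Rn n : nat) : state n := normalize (@psiR_un Rn n).

End QuantumDefs.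

From HB Require Import structures.
From mathcomp Require Import all_boot all_order all_algebra.
From mathcomp Require Import complex.
From mathcomp Require Import all_classical all_reals all_analysis.
From mathcomp Require Import ring lra zify.
Set Implicit Arguments. Unset Strict Implicit. Unset Printing Implicit Defensive.
Import Order.TTheory GRing.Theory Num.Theory.
Local Open Scope ring_scope.
Local Open Scope complex_scope.
Local Open Scope classical_set_scope.
Import numFieldNormedType.Exports.

(* The unnormalised state is psi(x) = sum_k prod_i v_k(x_i) with the real unit
   vectors v_k = (cos (pi k / R), sin (pi k / R)), pairwise non-parallel for
   k < R.  For any sum of tensor powers, each purity Tr rho_S^2 is a polynomial
   in the Gram entries g_jk = <v_j, v_k>, and summing over all subsets S gives
     ||psi||^2 = sum_jk g_jk^n,
     2^-n sum_S Tr rho_S^2 = ||psi||^-4 sum_jklm ((g_jm g_kl + g_jk g_lm) / 2)^n.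
   As g_jj = 1 and |g_jk| < 1 for j <> k, only the diagonal terms survive, both
   sums tend to R, and the concentratable entanglement tends to 1 - R / R^2.
   For the rank, let w_p be orthogonal to v_p.  For n >= 2(R - 1), the product
   functionals with factors w_p (p <> j) on a first block of R - 1 qubits and
   w_p (p <> l) on a second one (and v_l elsewhere) form an R x R matrix that is diagonal and
   invertible on psi, but factors through r on any CP decomposition of length r;
   hence r >= R.  In particular psi <> 0. *)

Section FiniteSums.
Variable A : comPzRingType.

Lemma sum_vanishing_prod n (S : {set 'I_n}) (h : 'I_n -> bool -> A) :
  \sum_(x : config n | [forall j in S, x j == false]) \prod_(i in ~: S) h i (x i)
  = \prod_(i in ~: S) \sum_(b : bool) h i b.
Proof.
rewrite (big_distr_big_dep false) /=; apply: eq_bigl => x.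
apply/forall_inP/pfamilyP => [x0|[x_supp _] j jS].
  split=> //; apply/fintype.subsetP => j; rewrite !inE.
  by apply: contraR => /negbNE /x0 ->.
by move/fintype.subsetP: x_supp => /(_ j); rewrite !inE jS; case: (x j) => // /(_ isT).
Qed.

Lemma sum_subsets_prod n (a b : A) :
  \sum_(S : {set 'I_n}) (\prod_(i in S) a) * (\prod_(i in ~: S) b) = (a + b) ^+ n.
Proof.
have -> : (a + b) ^+ n = \prod_(i < n) \sum_(c : bool) (if c then a else b).
  rewrite -[in LHS](card_ord n) -prodr_const; apply: eq_bigr => i _.
  by rewrite big_bool.
rewrite bigA_distr_bigA /= (reindex (fun f : {ffun 'I_n -> bool} => [set i | f i]%SET)) /=.
  apply: eq_bigr => f _; rewrite [RHS](bigID (fun i => f i)) /=.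
  by congr (_ * _); apply: eq_big => i; rewrite ?inE //; case: (f i).
exists (fun S : {set 'I_n} => [ffun i => i \in S]) => [f _|S _].
  by apply/ffunP => i; rewrite ffunE inE.
by apply/setP => i; rewrite inE ffunE.
Qed.

Lemma sum_mul_delta (K : nat) (F : 'I_K -> A) (l : 'I_K) :
  \sum_(m < K) F m * (l == m)%:R = F l.
Proof.
rewrite (bigD1 l) //= eqxx mulr1 big1 ?addr0 // => m.
by rewrite eq_sym => /negbTE ->; rewrite mulr0.
Qed.

Lemma sum_delta (K : nat) (l : 'I_K) : \sum_(m < K) ((l == m)%:R : A) = 1.
Proof. by under eq_bigr do rewrite -[_%:R]mul1r; exact: sum_mul_delta. Qed.

End FiniteSums.

Section SumOfTensorPowers.
Variables (A : comPzRingType) (K : nat) (W : 'I_K -> bool -> A) (s : A).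

Definition rho_noconj n (F : config n -> A) (S : {set 'I_n}) (a b : config n) : A :=
  \sum_(c : config n | [forall j in S, c j == false]) F (mix S a c) * F (mix S b c).

Definition purity_noconj n (F : config n -> A) (S : {set 'I_n}) : A :=
  \sum_(a : config n | [forall j in ~: S, a j == false])
    \sum_(b : config n | [forall j in ~: S, b j == false])
      rho_noconj F S a b * rho_noconj F S b a.

Definition sum_tpow {n} (x : config n) : A := s * \sum_(k < K) \prod_(i < n) W k (x i).

Definition gram (j k : 'I_K) : A := \sum_(b : bool) W j b * W k b.

Lemma exchange_big_outer (I J L : finType) (P : pred I) (Q : pred J) (F : I -> J -> L -> A) :
  \sum_(a | P a) \sum_(b | Q b) \sum_(j : L) F a b j
  = \sum_(j : L) \sum_(a | P a) \sum_(b | Q b) F a b j.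
Proof.
by under eq_bigr do rewrite exchange_big; rewrite exchange_big.
Qed.

Lemma sum_tpow_mix n (S : {set 'I_n}) (a c : config n) :
  sum_tpow (mix S a c) =
  s * \sum_(k < K) (\prod_(i in S) W k (a i)) * \prod_(i in ~: S) W k (c i).
Proof.
congr (_ * _); apply: eq_bigr => k _; rewrite (bigID (mem S)) /=.
by congr (_ * _); apply: eq_big => i; rewrite ?inE // /mix ffunE; case: (i \in S).
Qed.

Lemma rho_noconj_sum_tpow n (S : {set 'I_n}) (a b : config n) :
  rho_noconj sum_tpow S a b = s ^+ 2 * \sum_(j < K) \sum_(k < K)
    (\prod_(i in S) W j (a i)) * (\prod_(i in S) W k (b i)) * \prod_(i in ~: S) gram j k.
Proof.
rewrite /rho_noconj (eq_bigr (fun c : config n => s ^+ 2 * \sum_(j < K) \sum_(k < K)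
    (\prod_(i in S) W j (a i)) * (\prod_(i in S) W k (b i)) *
    \prod_(i in ~: S) (W j (c i) * W k (c i)))) => [|c _]; last first.
  rewrite !sum_tpow_mix mulrACA -expr2 big_distrl; congr (_ * _); apply: eq_bigr => j _ /=.
  by rewrite big_distrr; apply: eq_bigr => k _ /=; rewrite big_split /= mulrACA.
rewrite -mulr_sumr exchange_big; congr (_ * _); apply: eq_bigr => j _.
rewrite exchange_big; apply: eq_bigr => k _.
by rewrite -mulr_sumr (sum_vanishing_prod S (fun i b => W j b * W k b)).
Qed.

Lemma sum_restricted_prod n (S : {set 'I_n}) (j k : 'I_K) :
  \sum_(a : config n | [forall i in ~: S, a i == false])
    (\prod_(i in S) W j (a i)) * (\prod_(i in S) W k (a i))
  = \prod_(i in S) gram j k.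
Proof.
rewrite -[in RHS](finset.setCK S).
rewrite -(sum_vanishing_prod (~: S) (fun i b => W j b * W k b)) finset.setCK.
by apply: eq_bigr => a _; rewrite big_split.
Qed.

Lemma purity_noconj_sum_tpow n (S : {set 'I_n}) :
  purity_noconj sum_tpow S = \sum_(j < K) \sum_(k < K) \sum_(l < K) \sum_(m < K)
    s ^+ 4 * ((\prod_(i in ~: S) gram j k * \prod_(i in ~: S) gram l m) *
              (\prod_(i in S) gram j m * \prod_(i in S) gram k l)).
Proof.
set P := fun x : config n => [forall i in ~: S, x i == false].
rewrite /purity_noconj (eq_bigr (fun a : config n => \sum_(b | P b)
  \sum_(j < K) \sum_(k < K) \sum_(l < K) \sum_(m < K) s ^+ 4 *
    ((\prod_(i in S) W j (a i)) * (\prod_(i in S) W k (b i)) * \prod_(i in ~: S) gram j k) *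
    ((\prod_(i in S) W l (b i)) * (\prod_(i in S) W m (a i)) * \prod_(i in ~: S) gram l m)))
  => [|a _]; last first.
  apply: eq_bigr => b _; rewrite !rho_noconj_sum_tpow mulrACA -exprD.
  rewrite big_distrl mulr_sumr; apply: eq_bigr => j _ /=.
  rewrite big_distrl mulr_sumr; apply: eq_bigr => k _ /=.
  rewrite big_distrr mulr_sumr; apply: eq_bigr => l _ /=.
  by rewrite big_distrr mulr_sumr; apply: eq_bigr => m _ /=; rewrite mulrA.
rewrite exchange_big_outer; apply: eq_bigr => j _.
rewrite exchange_big_outer; apply: eq_bigr => k _.
rewrite exchange_big_outer; apply: eq_bigr => l _.
rewrite exchange_big_outer; apply: eq_bigr => m _.
rewrite -(sum_restricted_prod S j m) -(sum_restricted_prod S k l) mulrA.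
rewrite big_distrl mulr_sumr; apply: eq_bigr => a _ /=.
by rewrite big_distrr mulr_sumr; apply: eq_bigr => b _ /=; ring.
Qed.

Lemma sum_purity_noconj_sum_tpow n :
  \sum_(S : {set 'I_n}) purity_noconj sum_tpow S =
  s ^+ 4 * \sum_(j < K) \sum_(k < K) \sum_(l < K) \sum_(m < K)
    (gram j m * gram k l + gram j k * gram l m) ^+ n.
Proof.
under eq_bigr do rewrite purity_noconj_sum_tpow.
rewrite mulr_sumr exchange_big; apply: eq_bigr => j _.
rewrite mulr_sumr exchange_big; apply: eq_bigr => k _.
rewrite mulr_sumr exchange_big; apply: eq_bigr => l _.
rewrite mulr_sumr exchange_big; apply: eq_bigr => m _.
rewrite -mulr_sumr -sum_subsets_prod; congr (_ * _); apply: eq_bigr => S _.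
by rewrite -!big_split mulrC.
Qed.

Lemma sum_sqr_sum_tpow n :
  \sum_(x : config n) sum_tpow x ^+ 2 = s ^+ 2 * \sum_(j < K) \sum_(k < K) gram j k ^+ n.
Proof.
rewrite (eq_bigr (fun x : config n => s ^+ 2 * \sum_(j < K) \sum_(k < K)
    \prod_(i < n) (W j (x i) * W k (x i)))) => [|x _]; last first.
  rewrite exprMn; congr (_ * _); rewrite expr2 big_distrl; apply: eq_bigr => j _ /=.
  by rewrite big_distrr; apply: eq_bigr => k _ /=; rewrite big_split.
rewrite -mulr_sumr exchange_big; congr (_ * _); apply: eq_bigr => j _.
rewrite exchange_big; apply: eq_bigr => k _.
by rewrite -[in RHS](card_ord n) -prodr_const bigA_distr_bigA.
Qed.

End SumOfTensorPowers.

Section RealAmplitudes.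
Variable R : realType.

Lemma conj_real_complex (r : R) : Num.conj r%:C = r%:C.
Proof. exact: conjc_real. Qed.

Lemma conc_ent_real n (psi : state R n) (F : config n -> R) :
  (forall x, psi x = (F x)%:C) ->
  conc_ent psi = (1 - (2 ^+ n)^-1 * \sum_(S : {set 'I_n}) purity_noconj F S)%:C.
Proof.
move=> psiF; rewrite /conc_ent rmorphB rmorph1 rmorphM fmorphV rmorphXn rmorph_nat.
congr (_ - _ * _); rewrite rmorph_sum; apply: eq_bigr => S _.
rewrite rmorph_sum; apply: eq_bigr => a _; rewrite rmorph_sum; apply: eq_bigr => b _.
rewrite rmorphM !rmorph_sum; congr (_ * _); apply: eq_bigr => c _;
  by rewrite !psiF conj_real_complex rmorphM.
Qed.

Lemma sqnorm_real n (psi : state R n) (F : config n -> R) :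
  (forall x, psi x = (F x)%:C) -> sqnorm psi = \sum_x F x ^+ 2.
Proof.
by move=> psiF; apply: eq_bigr => x _; rewrite psiF conj_real_complex -rmorphM.
Qed.

End RealAmplitudes.

Section RyState.
Variables (R : realType) (Rn : nat).
Hypothesis Rn_gt0 : (0 < Rn)%N.

Definition ry_angle (k : nat) : R := pi * k%:R / Rn%:R.

Definition ry_vec (k : nat) (b : bool) : R :=
  if b then sin (ry_angle k) else cos (ry_angle k).

Local Notation W := (fun k : 'I_Rn => ry_vec k).

Definition ry_ket (k : nat) : bool -> R[i] :=
  apply1 (Ry (2 * pi * k%:R / Rn%:R)) (@ket0 R).

Definition norm_const n : R := (Num.sqrt (sqnorm (@psiR_un R Rn n)))^-1.

Lemma Rn_neq0 : (Rn%:R : R) != 0.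
Proof. by rewrite pnatr_eq0 -lt0n. Qed.

Lemma ry_ketE k : ry_ket k = fun b => (ry_vec k b)%:C.
Proof.
have half_angle : 2 * pi * k%:R / Rn%:R / 2 = ry_angle k :> R.
  by rewrite /ry_angle !(mulrAC _ _ 2^-1) mulfV ?mul1r // pnatr_eq0.
apply: funext => b; rewrite /ry_ket /apply1 big_bool /ket0 /Ry half_angle.
by case: b; rewrite /= mulr0 add0r mulr1.
Qed.

Lemma psiR_un_real n x : @psiR_un R Rn n x = (sum_tpow W 1 x)%:C.
Proof.
rewrite /sum_tpow mul1r rmorph_sum; apply: eq_bigr => k _.
rewrite /tens_pow_ket0 /tens rmorph_prod; apply: eq_bigr => i _.
by rewrite -/(ry_ket k) ry_ketE.
Qed.

Lemma psiR_real n x : @psiR R Rn n x = (sum_tpow W (norm_const n) x)%:C.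
Proof. by rewrite /psiR /normalize psiR_un_real -rmorphM /sum_tpow mul1r. Qed.

Lemma sqnorm_psiR_un n :
  sqnorm (@psiR_un R Rn n) = \sum_(j < Rn) \sum_(k < Rn) gram W j k ^+ n.
Proof. by rewrite (sqnorm_real (psiR_un_real (n := n))) sum_sqr_sum_tpow expr1n mul1r. Qed.

Lemma sqnorm_psiR_un_ge0 n : 0 <= sqnorm (@psiR_un R Rn n).
Proof. by rewrite (sqnorm_real (psiR_un_real (n := n))) sumr_ge0 // => x _; exact: sqr_ge0. Qed.

Definition gram_purity_sum n : R :=
  \sum_(j < Rn) \sum_(k < Rn) \sum_(l < Rn) \sum_(m < Rn)
    ((gram W j m * gram W k l + gram W j k * gram W l m) / 2) ^+ n.

Lemma Re_conc_ent_psiR n :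
  complex.Re (conc_ent (@psiR R Rn n)) =
  1 - gram_purity_sum n / sqnorm (@psiR_un R Rn n) ^+ 2.
Proof.
rewrite (conc_ent_real (psiR_real (n := n))) /= sum_purity_noconj_sum_tpow.
have -> : norm_const n ^+ 4 = (sqnorm (@psiR_un R Rn n) ^+ 2)^-1.
  by rewrite /norm_const exprVn (exprM _ 2 2) sqr_sqrtr ?sqnorm_psiR_un_ge0.
rewrite mulrCA [in RHS]mulrC; congr (1 - _ * _); rewrite mulr_sumr; apply: eq_bigr => j _.
rewrite mulr_sumr; apply: eq_bigr => k _; rewrite mulr_sumr; apply: eq_bigr => l _.
by rewrite mulr_sumr; apply: eq_bigr => m _; rewrite exprMn exprVn mulrC.
Qed.

Lemma gram_ry j k : gram W j k = cos (ry_angle j - ry_angle k).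
Proof. by rewrite /gram big_bool cosB addrC. Qed.

Lemma sin_ry_angle_sub_neq0 (j k : nat) :
  (j < Rn)%N -> (k < Rn)%N -> j != k -> sin (ry_angle j - ry_angle k) != 0.
Proof.
wlog kj : j k / (k < j)%N => [hwlog|].
  move=> hj hk; case: (ltngtP k j) => [kj|jk|//] _.
    by apply: hwlog; rewrite // gtn_eqF.
  by rewrite -opprB sinN oppr_eq0; apply: hwlog; rewrite // gtn_eqF.
move=> hj _ _.
have -> : ry_angle j - ry_angle k = pi * ((j - k)%:R / Rn%:R).
  by rewrite /ry_angle natrB ?(ltnW kj) //; field; exact: Rn_neq0.
apply/lt0r_neq0/sin_gt0_pi; rewrite mulr_gt0 ?pi_gt0 ?divr_gt0 ?ltr0n ?subn_gt0 //=.
rewrite -[ltRHS]mulr1 ltr_pM2l ?pi_gt0 // ltr_pdivrMr ?ltr0n // mul1r ltr_nat.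
exact: leq_ltn_trans (leq_subr _ _) hj.
Qed.

Lemma gram_ry_diag (j : 'I_Rn) : gram W j j = 1.
Proof. by rewrite gram_ry subrr cos0. Qed.

Lemma gram_ry_le1 (j k : 'I_Rn) : `|gram W j k| <= 1.
Proof. by rewrite gram_ry cos_max. Qed.

Lemma gram_ry_lt1 (j k : 'I_Rn) : j != k -> `|gram W j k| < 1.
Proof.
move=> jk; have := sin_ry_angle_sub_neq0 (ltn_ord j) (ltn_ord k) jk.
rewrite gram_ry; have := cos2Dsin2 (ry_angle j - ry_angle k).
set c := cos _; set s := sin _ => cs1 s0.
have s2 : 0 < s ^+ 2 by rewrite exprn_even_gt0.
by rewrite ltr_norml; apply/andP; split; nra.
Qed.

End RyState.

Section Limits.
Variable R : realType.

Lemma cvg_sum_fin (I : finType) (f : I -> nat -> R) (a : I -> R) :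
  (forall i, f i n @[n --> \oo] --> a i) ->
  \sum_(i : I) f i n @[n --> \oo] --> \sum_(i : I) a i.
Proof. by move=> fa; apply: cvg_big => //; exact: add_continuous. Qed.

Lemma cvg_expr_indicator (x : R) (b : bool) :
  (b -> x = 1) -> (~~ b -> `|x| < 1) -> x ^+ n @[n --> \oo] --> (b%:R : R).
Proof.
case: b => [/(_ isT) -> _ | _ /(_ isT) x1]; last exact: cvg_expr.
by under eq_fun do rewrite expr1n; exact: cvg_cst.
Qed.

Lemma norm_half_add_lt1 (x y z w : R) :
  `|x| < 1 -> `|y| <= 1 -> `|z| <= 1 -> `|w| <= 1 -> `|(x * y + z * w) / 2| < 1.
Proof.
move=> x1 y1 z1 w1.
rewrite normrM [`|2^-1|]ger0_norm ?invr_ge0 ?ler0n // ltr_pdivrMr ?ltr0n // mul1r.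
have xy1 : `|x * y| < 1.
  by rewrite normrM; apply: le_lt_trans x1; rewrite -[leRHS]mulr1 ler_wpM2l.
have zw1 : `|z * w| <= 1.
  by rewrite normrM; apply: le_trans z1; rewrite -[leRHS]mulr1 ler_wpM2l.
by have := ler_normD (x * y) (z * w); lra.
Qed.

End Limits.

Section ConcentratableEntanglementLimit.
Variables (R : realType) (Rn : nat).
Hypothesis Rn_gt0 : (0 < Rn)%N.
Local Notation W := (fun k : 'I_Rn => ry_vec R Rn k).

Lemma sqnorm_psiR_un_cvg : sqnorm (@psiR_un R Rn n) @[n --> \oo] --> (Rn%:R : R).
Proof.
under eq_fun do rewrite sqnorm_psiR_un.
have -> : (Rn%:R : R) = \sum_(j < Rn) \sum_(k < Rn) ((j == k)%:R : R).
  by under eq_bigr do rewrite sum_delta; rewrite sumr_const card_ord.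
apply: cvg_sum_fin => j; apply: cvg_sum_fin => k; apply: cvg_expr_indicator.
  by move/eqP <-; exact: gram_ry_diag.
exact: gram_ry_lt1.
Qed.

Lemma gram_purity_sum_cvg : gram_purity_sum R Rn n @[n --> \oo] --> (Rn%:R : R).
Proof.
have -> : (Rn%:R : R) = \sum_(j < Rn) \sum_(k < Rn) \sum_(l < Rn) \sum_(m < Rn)
    ((j == k)%:R * (k == l)%:R * (l == m)%:R : R).
  under eq_bigr do under eq_bigr do under eq_bigr do rewrite sum_mul_delta.
  under eq_bigr do under eq_bigr do rewrite sum_mul_delta.
  by under eq_bigr do rewrite sum_delta; rewrite sumr_const card_ord.
apply: cvg_sum_fin => j; apply: cvg_sum_fin => k; apply: cvg_sum_fin => l.
apply: cvg_sum_fin => m; rewrite -!natrM !mulnb; apply: cvg_expr_indicator.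
  case/andP => /andP [/eqP <- /eqP <-] /eqP <-.
  by rewrite !gram_ry_diag mulr1 -mulr2n -mulr_natr mulfV.
rewrite !negb_and -!orbA => neq.
have g1 := @gram_ry_le1 R Rn; have g_lt1 := @gram_ry_lt1 R Rn Rn_gt0.
have [jm|/negPn/eqP jm] := boolP (j != m); first by apply: norm_half_add_lt1; rewrite ?g_lt1.
have [kl|/negPn/eqP kl] := boolP (k != l).
  by rewrite [gram W j m * _]mulrC; apply: norm_half_add_lt1; rewrite ?g_lt1.
(* Remaining case j = m, k = l: the term is (g_jk g_kj + 1) / 2 with j <> k. *)
subst m l; rewrite addrC; apply: norm_half_add_lt1; rewrite ?g1 // g_lt1 //.
by apply: contraTneq neq => ->; rewrite !eqxx.
Qed.

Lemma conc_ent_psiR_cvg :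
  complex.Re (conc_ent (@psiR R Rn n)) @[n --> \oo] --> ((Rn%:R - 1) / Rn%:R : R).
Proof.
under eq_fun do rewrite Re_conc_ent_psiR.
have -> : (Rn%:R - 1) / Rn%:R = 1 - Rn%:R / Rn%:R ^+ 2 :> R.
  by field; exact: Rn_neq0.
apply: cvgB; first exact: cvg_cst.
apply: cvgM; first exact: gram_purity_sum_cvg.
apply: cvgV; first by rewrite expf_neq0 // Rn_neq0.
by apply: cvgM; exact: sqnorm_psiR_un_cvg.
Qed.

End ConcentratableEntanglementLimit.

Section ProductFunctionals.
Variable R : realType.
Local Notation C := (R[i]).

Definition pairing (f g : bool -> C) : C := \sum_(b : bool) f b * g b.

Definition eval_prod n (f : 'I_n -> bool -> C) (psi : state R n) : C :=
  \sum_(x : config n) (\prod_(q < n) f q (x q)) * psi x.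

Lemma eval_prod_tens n (f phi : 'I_n -> bool -> C) :
  eval_prod f (tens phi) = \prod_(q < n) pairing (f q) (phi q).
Proof. by rewrite /eval_prod bigA_distr_bigA; apply: eq_bigr => x _; rewrite -big_split. Qed.

Lemma eval_prod_lincomb n r (f : 'I_n -> bool -> C) (psi : state R n)
    (c : 'I_r -> C) (phi : 'I_r -> 'I_n -> bool -> C) :
  (forall x, psi x = \sum_(i < r) c i * tens (phi i) x) ->
  eval_prod f psi = \sum_(i < r) c i * \prod_(q < n) pairing (f q) (phi i q).
Proof.
move=> psiE; rewrite /eval_prod; under eq_bigr do rewrite psiE big_distrr.
rewrite exchange_big; apply: eq_bigr => i _ /=.
by rewrite -eval_prod_tens mulr_sumr; apply: eq_bigr => x _; rewrite mulrCA.
Qed.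

End ProductFunctionals.

Section SumOfTensorPowersRank.
Variables (R : realType) (K : nat) (v w : nat -> bool -> R[i]).
Hypothesis pairing_w_v_eq0 :
  forall p k, (p < K)%N -> (k < K)%N -> (pairing (w p) (v k) == 0) = (p == k).
Hypothesis pairing_v_v_neq0 : forall k, (k < K)%N -> pairing (v k) (v k) != 0.
Local Notation m := K.-1.

Lemma unbump_lt_pred (h k : nat) : (h < K)%N -> (k < K)%N -> k != h -> (unbump h k < m)%N.
Proof. by move=> hK kK kh; rewrite /unbump; case: ltnP => /= hk; lia. Qed.

Lemma bump_lt (h q : nat) : (q < m)%N -> (bump h q < K)%N.
Proof. by move=> qm; rewrite /bump; case: leqP => /= hq; lia. Qed.

(* As [q] runs over [0, m), [bump j q] runs over the indices [p <> j]. *)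
Definition tail_factor (l q : nat) : bool -> R[i] :=
  if (q < m)%N then w (bump l q) else v l.

Definition separating_factor n (j l : nat) (q : 'I_n) : bool -> R[i] :=
  if (q < m)%N then w (bump j q) else tail_factor l (q - m).

Lemma separating_factor_vanish n (j l k : 'I_K) : (m + m <= n)%N ->
  (k != j) || (k != l) -> \prod_(q < n) pairing (separating_factor j l q) (v k) = 0.
Proof.
move=> hn kjl; have wv0 : pairing (w k) (v k) = 0 by apply/eqP; rewrite pairing_w_v_eq0.
case/orP: kjl => [kj|kl].
  have qm := unbump_lt_pred (ltn_ord j) (ltn_ord k) kj.
  have qn : (unbump j k < n)%N by lia.
  by rewrite (bigD1 (Ordinal qn)) //= /separating_factor /= qm unbumpK ?inE // wv0 mul0r.
have qm := unbump_lt_pred (ltn_ord l) (ltn_ord k) kl.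
have qn : (m + unbump l k < n)%N by lia.
rewrite (bigD1 (Ordinal qn)) //= /separating_factor /tail_factor /=.
rewrite ifN ?addKn ?qm ?unbumpK ?inE ?wv0 ?mul0r //.
by rewrite -leqNgt leq_addr.
Qed.

Lemma separating_factor_diag_neq0 n (j : 'I_K) :
  \prod_(q < n) pairing (separating_factor j j q) (v j) != 0.
Proof.
have w_neq0 q : (q < m)%N -> pairing (w (bump j q)) (v j) != 0.
  by move=> qm; rewrite pairing_w_v_eq0 ?bump_lt // eq_sym neq_bump.
apply/prodf_neq0 => q _; rewrite /separating_factor /tail_factor.
by case: ifP => [/w_neq0 //|_]; case: ifP => [/w_neq0 //|_]; exact: pairing_v_v_neq0.
Qed.

Lemma eval_separating_sum_tpow n (s : R[i]) (psi : state R n) (j l : 'I_K) :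
  (m + m <= n)%N -> (forall x, psi x = \sum_(k < K) s * tens (fun _ => v k) x) ->
  eval_prod (separating_factor j l) psi =
  if j == l then s * \prod_(q < n) pairing (separating_factor j j q) (v j) else 0.
Proof.
move=> hn /eval_prod_lincomb ->; rewrite -mulr_sumr; case: eqP => [<-|/eqP jl].
  rewrite (bigD1 j) //= [X in _ + X]big1 ?addr0 // => k kj.
  by apply: separating_factor_vanish; rewrite ?kj.
rewrite big1 ?mulr0 // => k _; apply: separating_factor_vanish => //.
by case: (eqVneq k j) => [->|//]; rewrite jl orbT.
Qed.

Lemma sum_tpow_cp_length_ge n (s : R[i]) (psi : state R n) r :
  (m + m <= n)%N -> s != 0 ->
  (forall x, psi x = \sum_(k < K) s * tens (fun _ => v k) x) ->
  has_cp_decomp psi r -> (K <= r)%N.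
Proof.
move=> hn s0 psiE [c [phi psi_cp]].
pose T : 'M[R[i]]_K := \matrix_(j, l) eval_prod (separating_factor j l) psi.
pose U : 'M[R[i]]_(K, r) := \matrix_(j, i)
  (c i * \prod_(q < n | (q < m)%N) pairing (w (bump j q)) (phi i q)).
pose V : 'M[R[i]]_(r, K) := \matrix_(i, l)
  \prod_(q < n | ~~ (q < m)%N) pairing (tail_factor l (q - m)) (phi i q).
have TUV : T = U *m V.
  apply/matrixP => j l; rewrite !mxE (eval_prod_lincomb _ psi_cp).
  apply: eq_bigr => i _; rewrite !mxE -mulrA (bigID (fun q : 'I_n => (q < m)%N)) /=.
  by congr (_ * (_ * _)); apply: eq_bigr => q qm; rewrite /separating_factor ?qm ?(negbTE qm).
have Tdiag : T = diag_mx (\row_j (s * \prod_(q < n) pairing (separating_factor j j q) (v j))).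
  apply/matrixP => j l; rewrite !mxE (eval_separating_sum_tpow _ _ hn psiE).
  by case: eqP => [->|_]; rewrite ?mxE ?mulr1n.
have rankT : \rank T = K.
  apply: mxrank_unit; rewrite unitmxE Tdiag det_diag unitfE.
  by apply/prodf_neq0 => j _; rewrite mxE mulf_neq0 ?separating_factor_diag_neq0.
by rewrite -rankT TUV (leq_trans (mxrankM_maxl _ _)) ?rank_leq_col.
Qed.

End SumOfTensorPowersRank.

Section RyStateRank.
Variables (R : realType) (Rn : nat).
Hypothesis Rn_gt0 : (0 < Rn)%N.
Local Notation m := Rn.-1.
Local Notation v := (ry_ket R Rn).

Definition ry_perp (p : nat) (b : bool) : R[i] :=
  (if b then - cos (ry_angle R Rn p) else sin (ry_angle R Rn p))%:C.

Lemma pairing_ry_perp p k :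
  pairing (ry_perp p) (v k) = (sin (ry_angle R Rn p - ry_angle R Rn k))%:C.
Proof. by rewrite ry_ketE /pairing big_bool /= -!rmorphM -rmorphD sinB; congr _%:C; ring. Qed.

Lemma pairing_ry_perp_eq0 p k : (p < Rn)%N -> (k < Rn)%N ->
  (pairing (ry_perp p) (v k) == 0) = (p == k).
Proof.
move=> pR kR; rewrite pairing_ry_perp fmorph_eq0.
have [->|pk] := eqVneq p k; first by rewrite subrr sin0 eqxx.
exact/negbTE/sin_ry_angle_sub_neq0.
Qed.

Lemma pairing_ry_ket k : pairing (v k) (v k) = 1.
Proof.
by rewrite ry_ketE /pairing big_bool /= -!rmorphM -rmorphD addrC -!expr2 cos2Dsin2.
Qed.

Lemma psiR_un_sum_tpow n x :
  @psiR_un R Rn n x = \sum_(k < Rn) 1 * tens (fun _ => v k) x.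
Proof. by under eq_bigr do rewrite mul1r. Qed.

Lemma psiR_sum_tpow n x :
  @psiR R Rn n x = \sum_(k < Rn) (norm_const R Rn n)%:C * tens (fun _ => v k) x.
Proof. by rewrite -mulr_sumr. Qed.

Lemma cp_length_ry_ge n (s : R[i]) (psi : state R n) r :
  (m + m <= n)%N -> s != 0 ->
  (forall x, psi x = \sum_(k < Rn) s * tens (fun _ => v k) x) ->
  has_cp_decomp psi r -> (Rn <= r)%N.
Proof.
move=> hn s0 psiE; apply: (sum_tpow_cp_length_ge pairing_ry_perp_eq0 _ hn s0 psiE) => k _.
by rewrite pairing_ry_ket oner_neq0.
Qed.

Lemma psiR_un_neq0 n : (m + m <= n)%N -> @psiR_un R Rn n <> (fun _ => 0).
Proof.
move=> hn psi0; suff: (Rn <= 0)%N by rewrite leqNgt Rn_gt0.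
apply: (cp_length_ry_ge hn (oner_neq0 _) (@psiR_un_sum_tpow n)).
by exists (fun _ => 0), (fun _ _ _ => 0) => x; rewrite psi0 big_ord0.
Qed.

Lemma norm_const_neq0 n : (m + m <= n)%N -> norm_const R Rn n != 0.
Proof.
move=> hn; rewrite invr_eq0 sqrtr_eq0 -ltNge lt_def sqnorm_psiR_un_ge0 andbT.
apply/eqP => sqnorm0; apply: (psiR_un_neq0 hn); apply: funext => x.
move: sqnorm0; rewrite (sqnorm_real (@psiR_un_real _ _ n)).
move=> /(psumr_eq0P (fun y _ => sqr_ge0 _)) /(_ x isT) /eqP.
by rewrite sqrf_eq0 psiR_un_real => /eqP ->.
Qed.

Lemma cp_rank_psiR n : (m + m <= n)%N -> cp_rank_eq (@psiR R Rn n) Rn.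
Proof.
move=> hn; split.
  by exists (fun _ => (norm_const R Rn n)%:C), (fun k _ => v k); exact: psiR_sum_tpow.
have c0 : (norm_const R Rn n)%:C != 0 by rewrite fmorph_eq0 norm_const_neq0.
by move=> r; exact: cp_length_ry_ge hn c0 (@psiR_sum_tpow n).
Qed.

End RyStateRank.

Theorem mainTheorem7 (R : realType) (Rn : nat) (hR : (2 <= Rn)%N) :
  (exists N : nat, forall n : nat, (N <= n)%N -> @psiR_un R Rn n <> (fun _ => 0))
  /\ ((fun n : nat => complex.Re (conc_ent (@psiR R Rn n))) @ \oo --> ((Rn%:R - 1) / Rn%:R : R))
  /\ (exists n0 : nat, forall n : nat, (n0 <= n)%N -> cp_rank_eq (@psiR R Rn n) Rn).
Proof.
have Rn_gt0 : (0 < Rn)%N by exact: ltnW.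
split; first by exists (Rn.-1 + Rn.-1)%N => n; exact: psiR_un_neq0.
split; first exact: conc_ent_psiR_cvg.
by exists (Rn.-1 + Rn.-1)%N => n; exact: cp_rank_psiR.
Qed.
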